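(* Let a group $G$ act by combinatorial isometries without cube inversions on a $\mathrm{CAT}(0)$ cube complex $Z$, and let $\mathfrak{H}$ be a $G$-invariant family of hyperplanes of $Z$ which is strongly collapsible. Then $\mathfrak{H}$ is weakly collapsible.
   Context: In a $\mathrm{CAT}(0)$ cube complex, hyperplanes are equivalence classes of edges under the relation generated by ''being opposite edges of a square''; each hyperplane $H$ has two halfspaces (the components of the complement of its open carrier, the union of open cells whose closure contains an edge dual to $H$); the carrier of $H$ is the union of closed cubes containing an edge dual to $H$. For non-empty subsets $A,B$ (a hyperplane being replaced by its carrier), $\mathrm{Sep}(A\mid B)$ is the set of hyperplanes $H$ such that $A$ is contained in one halfspace of $H$ and $B$ in the other. A cube inversion is an isometry stabilizing some cube without fixing it pointwise. For a $G$-invariant family $\mathfrak{H}$ of hyperplanes: $\mathfrak{H}$ is weakly collapsible if for every vertex $z$ and every $g\in G\setminus\mathrm{Stab}(z)$, $\mathrm{Sep}(z\mid gz)\not\subseteq\mathfrak{H}$; $\mathfrak{H}$ is strongly collapsible if for every $H\in\mathfrak{H}$ and every $g\in G\setminus\mathrm{Stab}(H)$, $\mathrm{Sep}(H\mid gH)\not\subseteq\mathfrak{H}$. *)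

From mathcomp Require Import all_boot.
From Stdlib Require Import Relations.Relation_Operators.
Set Implicit Arguments. Unset Strict Implicit. Unset Printing Implicit Defensive.

(* A CAT(0) cube complex Z is encoded by its 1-skeleton, a median graph      *)
(* (Chepoi / Roller / Gerasimov: 1-skeleta of CAT(0) cube complexes are      *)
(* exactly the median graphs, and Z is recovered by filling in every         *)
Section CubeComplex.
Variable V : Type.
Variable adj : V -> V -> Prop.

Inductive nwalk : nat -> V -> V -> Prop :=
  | nwalk0 x : nwalk 0 x x
  | nwalkS n x y z : adj x y -> nwalk n y z -> nwalk n.+1 x z.

Definition gdist (x y : V) (n : nat) : Prop :=
  nwalk n x y /\ forall m, nwalk m x y -> n <= m.

Definition between (x z y : V) : Prop :=
  exists a b, gdist x z a /\ gdist z y b /\ gdist x y (a + b).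

Definition median_graph : Prop :=
  (forall x y, adj x y -> adj y x) /\
  (forall x, ~ adj x x) /\
  (forall x y, exists n, nwalk n x y) /\
  (forall x y z, exists m, (between x m y /\ between y m z /\ between x m z) /\
       forall m', between x m' y /\ between y m' z /\ between x m' z -> m' = m).

Definition is_edge (e : V * V) : Prop := adj e.1 e.2.

(* elementary relation generating hyperplanes: opposite edges of a square
   a - b - c - d - a, and reversal of orientation *)
Definition hyp_step (e f : V * V) : Prop :=
  (exists a b c d, e = (a, b) /\ f = (d, c) /\
     adj a b /\ adj b c /\ adj c d /\ adj d a /\ a <> c /\ b <> d) \/
  (is_edge e /\ f = (e.2, e.1)).

Definition hyp_equiv : V * V -> V * V -> Prop := clos_refl_sym_trans _ hyp_step.

(* A hyperplane is the class of an edge e.  A family of hyperplanes is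
   encoded by the set of all edges dual to its members, i.e. a set of edges
   saturated under hyp_equiv. *)
Definition hyp_family (F : V * V -> Prop) : Prop :=
  (forall e, F e -> is_edge e) /\
  (forall e f, F e -> hyp_equiv e f -> F f).

Definition carrier (e : V * V) (v : V) : Prop :=
  exists f, is_edge f /\ hyp_equiv e f /\ (v = f.1 \/ v = f.2).

(* u, v lie in the same halfspace of the hyperplane dual to e:
   connected in the complement of the (open) carrier *)
Definition sameside (e : V * V) : V -> V -> Prop :=
  clos_refl_sym_trans _ (fun x y => adj x y /\ ~ hyp_equiv e (x, y)).

Definition separates (e : V * V) (A B : V -> Prop) : Prop :=
  is_edge e /\
  (forall a a', A a -> A a' -> sameside e a a') /\
  (forall b b', B b -> B b' -> sameside e b b') /\
  (forall a b, A a -> B b -> ~ sameside e a b).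

Definition is_cube (C : V -> Prop) : Prop :=
  exists (n : nat) (f : {ffun 'I_n -> bool} -> V),
    injective f /\ (forall v, C v <-> exists u, f u = v) /\
    (forall u w, adj (f u) (f w) <-> #|[pred i | u i != w i]| = 1).

End CubeComplex.

Section Action.
Variables (V : Type) (adj : V -> V -> Prop).
Variables (G : Type) (mul : G -> G -> G) (one : G) (inv : G -> G).
Variable act : G -> V -> V.

Definition is_group : Prop :=
  (forall a b c, mul a (mul b c) = mul (mul a b) c) /\
  (forall a, mul one a = a) /\ (forall a, mul (inv a) a = one).

Definition isometric_action : Prop :=
  (forall x, act one x = x) /\
  (forall g h x, act (mul g h) x = act g (act h x)) /\
  (forall g x y, adj x y <-> adj (act g x) (act g y)).

Definition act_edge (g : G) (e : V * V) : V * V := (act g e.1, act g e.2).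

Definition no_cube_inversions : Prop :=
  forall g C, is_cube adj C -> (forall v, C v <-> C (act g v)) ->
    forall v, C v -> act g v = v.

Definition G_invariant (F : V * V -> Prop) : Prop :=
  forall g e, F e -> F (act_edge g e).

Definition weakly_collapsible (F : V * V -> Prop) : Prop :=
  forall (z : V) (g : G), act g z <> z ->
    ~ (forall e, separates adj e (fun v => v = z) (fun v => v = act g z) -> F e).

(* g \notin Stab(H) for H dual to e  <->  ~ hyp_equiv e (g e) *)
Definition strongly_collapsible (F : V * V -> Prop) : Prop :=
  forall (e : V * V) (g : G), F e -> ~ hyp_equiv adj e (act_edge g e) ->
    ~ (forall e', separates adj e' (carrier adj e) (carrier adj (act_edge g e)) -> F e').

End Action.

(* Suppose g z <> z while every hyperplane separating z from g z lies in F.  If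
   (z, y) is an edge pointing towards g z, its hyperplane H separates z from g z,
   and so does every hyperplane separating the carrier of H (which contains z)
   from that of g H (which contains g z); strong collapsibility therefore forces
   g H = H.  Walking back along a geodesic from z to g z, every hyperplane
   separating z from g z is then adjacent to z, hence stabilised by g.  The
   vertices separated from z only by these d(z, g z) pairwise crossing
   hyperplanes form a cube containing z which g preserves; as g inverts no
   cube, it fixes z.

   Hyperplanes are handled through the median graph: the edge (a, b) determines
   the halfspace {v | d(v, a) < d(v, b)}, and two edges are dual to the same
   hyperplane exactly when they induce the same partition of the vertices. *)

From mathcomp Require Import all_boot zify.
From Stdlib Require Import Relations.Relation_Operators Wf_nat Classical ClassicalEpsilon.
Set Implicit Arguments. Unset Strict Implicit. Unset Printing Implicit Defensive.

Lemma ex_least_nat (P : nat -> Prop) n0 : P n0 -> exists n, P n /\ forall m, P m -> n <= m.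
Proof.
move=> Pn0; have [n [[Pn n_min] _]] :=
  dec_inh_nat_subset_has_unique_least_element P (fun n => classic (P n)) (ex_intro P n0 Pn0).
by exists n; split=> // m /n_min /leP.
Qed.

Section MedianGraph.
Variables (V : Type) (adj : V -> V -> Prop).
Hypothesis adj_median : median_graph adj.

Lemma adj_sym x y : adj x y -> adj y x.
Proof. by case: adj_median => sym _; apply: sym. Qed.

Lemma adj_irrefl x : ~ adj x x.
Proof. by case: adj_median => _ [irr _]; apply: irr. Qed.

Lemma nwalk_cat n m x y z : nwalk adj n x y -> nwalk adj m y z -> nwalk adj (n + m) x z.
Proof. by elim=> // k a b c ab _ IH /IH; apply: nwalkS ab. Qed.

Lemma nwalk1 x y : adj x y -> nwalk adj 1 x y.
Proof. by move=> xy; apply: nwalkS xy (nwalk0 _ _). Qed.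

Lemma nwalk_rev n x y : nwalk adj n x y -> nwalk adj n y x.
Proof.
elim=> [a|k a b c ab _ IH]; first exact: nwalk0.
by rewrite -addn1; apply: nwalk_cat IH (nwalk1 (adj_sym ab)).
Qed.

Lemma nwalk0_eq x y : nwalk adj 0 x y -> x = y.
Proof. by move E: 0 => k walk; case: walk E. Qed.

Lemma nwalkS_inv n x z : nwalk adj n.+1 x z -> exists2 y, adj x y & nwalk adj n y z.
Proof. by move E: n.+1 => k walk; case: walk E => // k' a b c ab walk [->]; exists b. Qed.

Definition dist x y : nat := epsilon (inhabits 0) (gdist adj x y).

Lemma dist_gdist x y : gdist adj x y (dist x y).
Proof.
apply: epsilon_spec; have [_ [_ [connected _]]] := adj_median.
have [n0 walk0] := connected x y.
have [n [walk n_min]] := ex_least_nat (P := fun n => nwalk adj n x y) walk0.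
by exists n.
Qed.

Lemma nwalk_dist x y : nwalk adj (dist x y) x y.
Proof. by case: (dist_gdist x y). Qed.

Lemma dist_min x y m : nwalk adj m x y -> dist x y <= m.
Proof. by case: (dist_gdist x y) => _; apply. Qed.

Lemma gdist_dist x y n : gdist adj x y n -> dist x y = n.
Proof.
move=> [walk n_min]; apply/eqP.
by rewrite eqn_leq (dist_min walk) n_min //; apply: nwalk_dist.
Qed.

Lemma distC x y : dist x y = dist y x.
Proof. by apply/eqP; rewrite eqn_leq !dist_min //; apply/nwalk_rev/nwalk_dist. Qed.

Lemma dist_triangle x y z : dist x z <= dist x y + dist y z.
Proof. by apply: dist_min; apply: nwalk_cat; apply: nwalk_dist. Qed.

Lemma dist_eq0 x y : dist x y = 0 -> x = y.
Proof. by move=> xy0; apply: nwalk0_eq; rewrite -xy0; apply: nwalk_dist. Qed.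

Lemma dist_xx x : dist x x = 0.
Proof. by apply/eqP; rewrite -leqn0; apply/dist_min/nwalk0. Qed.

Lemma dist_adj x y : adj x y -> dist x y = 1.
Proof.
move=> xy; have := dist_min (nwalk1 xy); case E: (dist x y) => [|[|k]] // _.
by move: xy; rewrite (dist_eq0 E) => /adj_irrefl.
Qed.

Lemma dist_succ x y n : dist x y = n.+1 -> exists2 x', adj x x' & dist x' y = n.
Proof.
move=> xyn; have := nwalk_dist x y; rewrite xyn => /nwalkS_inv[x' xx' walk].
exists x' => //; apply/eqP; rewrite eqn_leq dist_min //=.
by have := dist_triangle x x' y; rewrite xyn dist_adj.
Qed.

Lemma dist1_adj x y : dist x y = 1 -> adj x y.
Proof. by case/dist_succ=> x' xx' /dist_eq0 <-. Qed.

Lemma dist_adjr_le v x y : adj x y -> dist v x <= (dist v y).+1.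
Proof. by move=> xy; have := dist_triangle v y x; rewrite (dist_adj (adj_sym xy)) addn1. Qed.

Lemma dist_adjl_le v x y : adj x y -> dist x v <= (dist y v).+1.
Proof. by rewrite (distC x) (distC y); apply: dist_adjr_le. Qed.

Lemma betweenE x m y : between adj x m y <-> dist x m + dist m y = dist x y.
Proof.
split=> [[a [b [xm [my xy]]]]|btw].
  by rewrite (gdist_dist xm) (gdist_dist my) (gdist_dist xy).
exists (dist x m), (dist m y); rewrite btw; split; [|split]; exact: dist_gdist.
Qed.

Definition is_median x y z m := [/\ dist x m + dist m y = dist x y,
  dist y m + dist m z = dist y z & dist x m + dist m z = dist x z].

Lemma ex_unique_median x y z :
  exists m, is_median x y z m /\ forall m', is_median x y z m' -> m' = m.
Proof.
have [_ [_ [_ median]]] := adj_median; have [m [[xy [yz xz]] m_unique]] := median x y z.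
exists m; split; first by split; apply/betweenE.
by move=> m' [xy' yz' xz']; apply: m_unique; split; [|split]; apply/betweenE.
Qed.

Lemma dist_adj_neq v a b : adj a b -> dist v a <> dist v b.
Proof.
move=> ab va_vb; have [m [[vma amb vmb] _]] := ex_unique_median v a b.
have ab1 := dist_adj ab; have ba1 := dist_adj (adj_sym ab).
have [ma|mb] : m = a \/ m = b.
  case am: (dist a m) => [|k]; first by left; apply/esym/dist_eq0.
  by right; apply: dist_eq0; lia.
- by move: vmb; rewrite ma; lia.
- by move: vma; rewrite mb; lia.
Qed.

Lemma dist_common_nbr p x y : adj p x -> adj p y -> x <> y -> dist x y = 2.
Proof.
move=> px py x_y; have := dist_triangle x p y.
rewrite (dist_adj py) (dist_adj (adj_sym px)).
case xy: (dist x y) => [|[|[|k]]] // _; first by case: x_y; apply: dist_eq0.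
by case: (dist_adj_neq (v := p) (dist1_adj xy)); rewrite (dist_adj px) (dist_adj py).
Qed.

Lemma common_nbr_median p x y z : adj p x -> adj p y -> adj p z ->
  x <> y -> y <> z -> x <> z -> is_median x y z p.
Proof.
move=> px py pz x_y y_z x_z.
rewrite /is_median (dist_common_nbr px py) // (dist_common_nbr py pz) //.
by rewrite (dist_common_nbr px pz) // !(distC _ p) (dist_adj px) (dist_adj py) (dist_adj pz).
Qed.

Lemma quadrangle u v w x k : dist u v = k -> dist u w = k -> v <> w ->
  adj x v -> adj x w -> dist u x = k.+1 ->
  exists t, [/\ adj t v, adj t w & (dist u t).+1 = k].
Proof.
move=> uv uw v_w xv xw ux; have vw := dist_common_nbr xv xw v_w.
have [m [[vmw wmu vmu] _]] := ex_unique_median v w u.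
rewrite (distC w u) (distC v u) uv uw vw in vmw wmu vmu.
have m_v : dist v m <> 0.
  by move/dist_eq0=> vm; move: wmu; rewrite -vm (distC w v) vw (distC v u) uv; lia.
have m_w : dist w m <> 0.
  by move/dist_eq0=> wm; move: vmu; rewrite -wm vw (distC w u) uw; lia.
rewrite (distC m w) in vmw; rewrite (distC m u) in vmu.
by exists m; split; [apply/adj_sym/dist1_adj; lia ..|lia].
Qed.

Definition halfspace (e : V * V) v : bool := dist v e.1 < dist v e.2.
Definition hsep e a b : bool := halfspace e a != halfspace e b.
Definition samehyp e f : Prop := forall a b, hsep e a b = hsep f a b.

Lemma samehyp_refl e : samehyp e e. Proof. by []. Qed.

Lemma samehyp_sym e f : samehyp e f -> samehyp f e.
Proof. by move=> ef a b; rewrite ef. Qed.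

Lemma samehyp_trans e f h : samehyp e f -> samehyp f h -> samehyp e h.
Proof. by move=> ef fh a b; rewrite ef fh. Qed.

Lemma hsep_xx e a : hsep e a a = false.
Proof. by rewrite /hsep eqxx. Qed.

Lemma hsepC e a b : hsep e a b = hsep e b a.
Proof. by rewrite /hsep eq_sym. Qed.

Lemma hsep_trans e a b c : hsep e a c = hsep e a b (+) hsep e b c.
Proof. by rewrite /hsep; case: (halfspace e a); case: (halfspace e b); case: halfspace. Qed.

Lemma halfspace_rev a b v : adj a b -> halfspace (b, a) v = ~~ halfspace (a, b) v.
Proof. by move=> ab; rewrite /halfspace /=; have := dist_adj_neq (v := v) ab; lia. Qed.

Lemma halfspace_dist a b v : adj a b -> halfspace (a, b) v -> dist v b = (dist v a).+1.
Proof. by move=> ab; rewrite /halfspace /=; have := dist_adjr_le v (adj_sym ab); lia. Qed.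

Lemma hsep_edge a b : adj a b -> hsep (a, b) a b.
Proof. by move=> ab; rewrite /hsep /halfspace /= (distC b a) (dist_adj ab) !dist_xx. Qed.

Lemma hsep_nbr a y w : adj a y -> hsep (a, y) a w = (dist y w < dist a w).
Proof.
move=> ay; have := dist_adj_neq (v := w) ay.
rewrite /hsep /halfspace /= dist_xx (dist_adj ay) !(distC w).
by case: (ltngtP (dist a w) (dist y w)).
Qed.

Lemma halfspace_square a b c e v : adj a b -> adj b c -> adj c e -> adj e a ->
  a <> c -> b <> e -> halfspace (a, b) v -> halfspace (e, c) v.
Proof.
move=> ab bc ce ea a_c b_e; rewrite /halfspace /= => vab.
have := dist_adj_neq (v := v) ce.
have := dist_adjr_le v ab; have := dist_adjr_le v (adj_sym ab).
have := dist_adjr_le v bc; have := dist_adjr_le v (adj_sym bc).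
have := dist_adjr_le v ce; have := dist_adjr_le v (adj_sym ce).
have := dist_adjr_le v ea; have := dist_adjr_le v (adj_sym ea).
case: (ltnP (dist v e) (dist v c)) => // ce_le *; exfalso.
have vc : dist v c = dist v a by lia.
have vb : dist v b = (dist v a).+1 by have := dist_adj_neq (v := v) ab; lia.
have [t [ta tc vt]] := quadrangle (erefl (dist v a)) vc a_c (adj_sym ab) bc vb.
have [m [_ m_unique]] := ex_unique_median b e t.
have b_t : b <> t by move=> bt; rewrite -bt in vt; lia.
have e_t : e <> t by move=> et; rewrite -et in vt; lia.
have /m_unique ma := common_nbr_median ab (adj_sym ea) (adj_sym ta) b_e e_t b_t.
have /m_unique mc := common_nbr_median (adj_sym bc) ce (adj_sym tc) b_e e_t b_t.
by apply: a_c; rewrite ma mc.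
Qed.

Lemma samehyp_step e f : hyp_step adj e f -> samehyp e f.
Proof.
case=> [[a [b [c [d [-> [-> [ab [bc [cd [da [a_c b_d]]]]]]]]]]]|[ee ->]] x y.
  have same v : halfspace (a, b) v = halfspace (d, c) v.
    apply/idP/idP; first exact: halfspace_square.
    by apply: halfspace_square; try apply: adj_sym; auto.
  by rewrite /hsep !same.
by case: e ee => a b /= ab; rewrite /hsep !(halfspace_rev _ ab) (inj_eq negb_inj).
Qed.

Lemma samehyp_equiv e f : hyp_equiv adj e f -> samehyp e f.
Proof.
elim=> [x y /samehyp_step //|x|x y _ /samehyp_sym //|x y z _ xy _ yz].
  exact: samehyp_refl.
exact: samehyp_trans xy yz.
Qed.

Lemma hyp_equiv_of_halfspace a b k x y : adj a b -> dist x a = k -> adj x y ->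
  halfspace (a, b) x -> ~~ halfspace (a, b) y -> hyp_equiv adj (a, b) (x, y).
Proof.
move=> ab; elim: k x y => [|k IH] x y xa xy hx hy.
  move: (dist_eq0 xa) => x_a; subst x.
  have yb : dist y b = 0.
    by move: hy; rewrite -halfspace_rev // /halfspace /= (distC y a) (dist_adj xy); lia.
  by rewrite (dist_eq0 yb); apply: rst_refl.
have xb := halfspace_dist ab hx.
have ya : dist y a = (dist y b).+1.
  by apply: halfspace_dist (adj_sym ab) _; rewrite halfspace_rev.
have := dist_adjl_le a (adj_sym xy); have := dist_adjl_le b xy => ? ?.
have [x' xx' x'a] := dist_succ xa.
have := dist_adjl_le b xx'; have := dist_adjr_le x' (adj_sym ab) => ? ?.
have x'_y : x' <> y by move=> x'y; rewrite x'y in x'a; lia.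
have [t [tx' ty bt]] : exists t, [/\ adj t x', adj t y & (dist b t).+1 = k.+1].
  by apply: (quadrangle _ _ x'_y xx' xy); rewrite ?(distC b); lia.
rewrite (distC b) in bt.
have := dist_adjl_le a (adj_sym ty); have := dist_adjl_le b (adj_sym ty) => ? ?.
apply: rst_trans (IH x' t x'a (adj_sym tx') _ _) _; rewrite /halfspace /=; try lia.
apply: rst_sym; apply: rst_step; left; exists x, y, t, x'.
do 3 split=> //; split; first exact: adj_sym.
split=> //; split; first exact: adj_sym.
by split=> [x_t|y_x']; [rewrite -x_t in bt|rewrite y_x' in ya]; lia.
Qed.

Lemma hyp_equiv_of_hsep e x y : is_edge adj e -> adj x y -> hsep e x y ->
  hyp_equiv adj e (x, y).
Proof.
case: e => a b /= ab xy; rewrite /hsep.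
case hx: (halfspace (a, b) x); case hy: (halfspace (a, b) y) => //= _.
  by apply: (hyp_equiv_of_halfspace ab (erefl _) xy); rewrite ?hy.
apply: rst_trans (hyp_equiv_of_halfspace ab (erefl _) (adj_sym xy) hy _) _.
  by rewrite hx.
by apply: rst_step; right; split=> //; apply: adj_sym.
Qed.

Lemma samehyp_of_hsep e x y : is_edge adj e -> adj x y -> hsep e x y -> samehyp e (x, y).
Proof. by move=> ee xy exy; apply/samehyp_equiv/hyp_equiv_of_hsep. Qed.

Lemma sameside_hsep e u v : is_edge adj e -> sameside adj e u v -> ~~ hsep e u v.
Proof.
move=> ee; elim=> [x y [xy not_equiv]|x|x y _|x y z _ xy _ yz].
- by apply/negP => /(hyp_equiv_of_hsep ee xy).
- by rewrite hsep_xx.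
- by rewrite hsepC.
- by rewrite (hsep_trans _ _ y) (negbTE xy) (negbTE yz).
Qed.

Lemma eq_of_hsep a b : (forall e, is_edge adj e -> ~~ hsep e a b) -> a = b.
Proof.
move=> no_sep; case ab: (dist a b) => [|k]; first exact: dist_eq0.
have [a' aa' a'b] := dist_succ ab.
by have := no_sep (a, a') aa'; rewrite hsep_nbr // a'b ab ltnSn.
Qed.

Lemma halfspace_convex e a m b : is_edge adj e -> dist a m + dist m b = dist a b ->
  ~~ hsep e a b -> ~~ hsep e a m.
Proof.
move=> ee; move Ek: (dist a m) => k; elim: k a Ek => [|k IH] a am amb not_ab.
  by rewrite (dist_eq0 am) hsep_xx.
have [a' aa' a'm] := dist_succ am.
have a'b : dist a' b = k + dist m b.
  by have := dist_triangle a' m b; have := dist_adjl_le b aa'; lia.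
case ea: (hsep e a a').
  have : hsep (a, a') a b by rewrite hsep_nbr //; lia.
  by rewrite -(samehyp_of_hsep ee aa' ea) (negbTE not_ab).
rewrite (hsep_trans _ _ a') ea /=; apply: IH => //.
by rewrite (hsep_trans _ _ a) hsepC ea.
Qed.

Lemma hsep_median e z a b c m : is_edge adj e -> is_median a b c m ->
  hsep e z m = [|| hsep e z a && hsep e z b, hsep e z b && hsep e z c
                 | hsep e z a && hsep e z c].
Proof.
move=> ee [mab mbc mac].
have agree x y : dist x m + dist m y = dist x y -> hsep e z x = hsep e z y ->
    hsep e z m = hsep e z x.
  move=> xmy zxy; have not_xy : ~~ hsep e x y.
    by rewrite (hsep_trans _ _ z) (hsepC e x) zxy addbb.
  by rewrite (hsep_trans _ _ x) (negbTE (halfspace_convex ee xmy not_xy)) addbF.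
move: (agree _ _ mab) (agree _ _ mbc) (agree _ _ mac).
case: (hsep e z m) (hsep e z a) (hsep e z b) (hsep e z c) => [] [] [] [] h1 h2 h3;
  by [apply: h1 | apply: h2 | apply: h3].
Qed.

Lemma adj_of_samehyp a b L : a <> b ->
  (forall e, is_edge adj e -> hsep e a b -> samehyp e L) -> adj a b.
Proof.
move=> a_b sepL; case ab: (dist a b) => [|k]; first by case: a_b; apply: dist_eq0.
have [a' aa' a'b] := dist_succ ab.
have aa'_ab : hsep (a, a') a b by rewrite hsep_nbr // a'b ab.
suff -> : b = a' by [].
apply/esym/eq_of_hsep => e ee; apply/negP => ea'b.
have e_aa' : samehyp e (a, a').
  case eaa': (hsep e a a'); first exact: samehyp_of_hsep.
  apply: samehyp_trans (sepL e ee _) (samehyp_sym (sepL (a, a') aa' aa'_ab)).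
  by rewrite (hsep_trans _ _ a') eaa' ea'b.
by move: ea'b; rewrite e_aa' (hsep_trans _ _ a) hsepC hsep_edge // aa'_ab.
Qed.

(* p lies on the side of (x, x') containing x but beyond L, so the median of
   x, t and p is the fourth corner of a square on x, x' and t. *)
Lemma push_edge L x x' t p : is_edge adj L -> adj x x' -> adj x' t ->
  samehyp L (x', t) -> ~ samehyp L (x, x') -> ~~ hsep (x, x') x p -> hsep L x p ->
  exists2 m, adj x m & samehyp L (x, m).
Proof.
move=> eL xx' x't L_x't L_xx' not_xx'_p L_xp.
have [m [median_m _]] := ex_unique_median x t p.
have sep_m K : is_edge adj K -> hsep K x m = hsep K x t && hsep K x p.
  by move=> eK; rewrite (hsep_median x eK median_m) hsep_xx /= orbF.
have not_L_xx' : ~~ hsep L x x'.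
  by apply/negP => /(samehyp_of_hsep eL xx').
have L_xt : hsep L x t by rewrite (hsep_trans _ _ x') (negbTE not_L_xx') L_x't hsep_edge.
have L_xm : hsep L x m by rewrite sep_m // L_xt.
suff xm : adj x m by exists m => //; apply: samehyp_of_hsep.
apply: (adj_of_samehyp (L := L)) => [x_m|K eK]; first by rewrite x_m hsep_xx in L_xm.
rewrite sep_m // => /andP[K_xt K_xp]; apply: NNPP => K_L.
have not_K_x't : ~~ hsep K x' t.
  apply/negP => /(samehyp_of_hsep eK x't) K_x't.
  by apply: K_L; apply: samehyp_trans K_x't (samehyp_sym L_x't).
have /(samehyp_of_hsep eK xx') K_xx' : hsep K x x'.
  by move: K_xt; rewrite (hsep_trans _ _ x') (negbTE not_K_x't) addbF.
by move: not_xx'_p; rewrite -K_xx' K_xp.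
Qed.

Section Geodesic.
Variables z w : V.
Local Notation n := (dist z w).

Definition geo_next v : V :=
  epsilon (inhabits v) (fun v' => adj v v' /\ (dist v' w).+1 = dist v w).

Lemma geo_nextP v : 0 < dist v w ->
  adj v (geo_next v) /\ (dist (geo_next v) w).+1 = dist v w.
Proof.
move=> vw_pos; rewrite /geo_next; apply epsilon_spec.
case vw: (dist v w) vw_pos => [|k] // _.
by have [v' vv' v'w] := dist_succ vw; exists v'; rewrite v'w.
Qed.

Definition geo i := iter i geo_next z.
Definition geo_edge i := (geo i, geo i.+1).

Lemma geoS i : geo i.+1 = geo_next (geo i). Proof. by []. Qed.

Lemma geo_dist_end i : i <= n -> dist (geo i) w = n - i.
Proof.
elim: i => [|i IH] i_n; first by rewrite subn0.
have /geo_nextP[_] : 0 < dist (geo i) w by rewrite IH //; lia.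
by rewrite geoS IH //; lia.
Qed.

Lemma geo_adj i : i < n -> adj (geo i) (geo i.+1).
Proof.
move=> i_n; rewrite geoS.
by have /geo_nextP[] : 0 < dist (geo i) w by rewrite geo_dist_end //; lia.
Qed.

Lemma is_edge_geo i : i < n -> is_edge adj (geo_edge i).
Proof. exact: geo_adj. Qed.

Lemma geo_end : geo n = w.
Proof. by apply: dist_eq0; rewrite geo_dist_end // subnn. Qed.

Lemma geo_nwalk a k : a + k <= n -> nwalk adj k (geo a) (geo (a + k)).
Proof.
elim: k a => [|k IH] a ak_n; first by rewrite addn0; apply: nwalk0.
by apply: nwalkS (geo_adj _) _; rewrite -?addSnnS; [lia|apply: IH; lia].
Qed.

Lemma geo_dist a b : a <= b -> b <= n -> dist (geo a) (geo b) = b - a.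
Proof.
move=> ab b_n; apply/eqP; rewrite eqn_leq; apply/andP; split.
  by apply: dist_min; rewrite -{2}(subnKC ab); apply: geo_nwalk; lia.
by have := dist_triangle (geo a) (geo b) w; rewrite !geo_dist_end //; lia.
Qed.

Lemma hsep_geo i a b : i < n -> a <= n -> b <= n ->
  hsep (geo_edge i) (geo a) (geo b) = ((a <= i) != (b <= i)).
Proof.
move=> i_n a_n b_n; have half m : m <= n -> halfspace (geo_edge i) (geo m) = (m <= i).
  move=> m_n; rewrite /halfspace /= -geoS; case: (leqP m i) => [m_i|i_m].
    by rewrite !geo_dist //; lia.
  by rewrite (distC _ (geo i)) (distC _ (geo i.+1)) !geo_dist //; lia.
by rewrite /hsep !half.
Qed.

Lemma hsep_geo_w i k : k <= i -> i < n -> hsep (geo_edge i) (geo k) w.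
Proof.
move=> k_i i_n; have := hsep_geo i_n (leq_trans k_i (ltnW i_n)) (leqnn n).
by rewrite geo_end k_i leqNgt i_n => ->.
Qed.

Lemma hsep_geo_zw i : i < n -> hsep (geo_edge i) z w.
Proof. exact: (hsep_geo_w (k := 0)). Qed.

Lemma samehyp_geo_inj i j : i < n -> j < n -> samehyp (geo_edge i) (geo_edge j) -> i = j.
Proof.
move=> i_n j_n ij; have := ij (geo i) (geo i.+1).
rewrite !hsep_geo ?(ltnW i_n) // leqnn ltnn.
by case: ltngtP.
Qed.

Lemma sep_geo_edge e : is_edge adj e -> hsep e z w ->
  exists2 i, i < n & samehyp e (geo_edge i).
Proof.
move=> ee e_zw; apply: NNPP => no_geo.
have geo_same i : i <= n -> ~~ hsep e z (geo i).
  elim: i => [|i IH] i_n; first by rewrite hsep_xx.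
  rewrite (hsep_trans _ _ (geo i)) (negbTE (IH (ltnW i_n))) /=.
  by apply/negP => /(samehyp_of_hsep ee (geo_adj i_n)) e_i; apply: no_geo; exists i.
by move: (geo_same n (leqnn n)); rewrite geo_end e_zw.
Qed.

End Geodesic.

Section Action.
Variables (G : Type) (mul : G -> G -> G) (one : G) (inv : G -> G) (act : G -> V -> V).
Hypothesis mul_group : is_group mul one inv.
Hypothesis act_isometric : isometric_action adj mul one act.

Lemma actK g : cancel (act g) (act (inv g)).
Proof.
have [_ [_ mulVg]] := mul_group; have [act1 [actM _]] := act_isometric.
by move=> x; rewrite -actM mulVg act1.
Qed.

Lemma actKV g : cancel (act (inv g)) (act g).
Proof. by move=> x; apply: (can_inj (actK (inv g))); rewrite actK. Qed.

Lemma adj_act g x y : adj x y -> adj (act g x) (act g y).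
Proof. by have [_ [_ iso]] := act_isometric; move/(iso g). Qed.

Lemma is_edge_act g e : is_edge adj e -> is_edge adj (act_edge act g e).
Proof. exact: adj_act. Qed.

Lemma act_edgeKV g e : act_edge act g (act_edge act (inv g) e) = e.
Proof. by case: e => a b; rewrite /act_edge /= !actKV. Qed.

Lemma dist_act g x y : dist (act g x) (act g y) = dist x y.
Proof.
have walk_act h k a b : nwalk adj k a b -> nwalk adj k (act h a) (act h b).
  by elim=> [c|j c d e cd _ IH]; [apply: nwalk0 | apply: nwalkS (adj_act h cd) IH].
apply/eqP; rewrite eqn_leq !dist_min //; last by apply: walk_act; apply: nwalk_dist.
by rewrite -{2}(actK g x) -{2}(actK g y); apply: walk_act; apply: nwalk_dist.
Qed.

Lemma hsep_act g e a b : hsep (act_edge act g e) (act g a) (act g b) = hsep e a b.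
Proof. by rewrite /hsep /halfspace /act_edge /= !dist_act. Qed.

Lemma samehyp_act g e f :
  samehyp (act_edge act g e) (act_edge act g f) <-> samehyp e f.
Proof.
split=> ef a b; first by rewrite -(hsep_act g e) ef hsep_act.
by rewrite -(actKV g a) -(actKV g b) !hsep_act ef.
Qed.

Section FixedPoint.
Variables (z : V) (g : G).
Local Notation w := (act g z).
Local Notation n := (dist z w).
Hypothesis nbr_stable : forall y, adj z y -> dist y w < dist z w ->
  samehyp (z, y) (act_edge act g (z, y)).

Definition hyp_at_z e := exists2 y, adj z y & samehyp e (z, y).

(* Take p := g y in push_edge, where (z, y) is dual to H = (x, x'): since g
   stabilises H, the edge (g z, g y) is dual to H, so g y lies on the side of H
   containing x and, like g z, beyond L. *)
Lemma push_toward_z L x x' t : is_edge adj L -> ~ hyp_at_z L ->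
  hyp_at_z (x, x') -> adj x x' -> hsep (x, x') z w -> hsep (x, x') x w -> hsep L x w ->
  adj x' t -> samehyp L (x', t) -> exists2 m, adj x m & samehyp L (x, m).
Proof.
move=> eL L_not_z [y zy H_zy] xx' H_zw H_xw L_xw x't L_x't.
have zy_w : dist y w < dist z w by rewrite -hsep_nbr // -H_zy.
have H_wp : samehyp (x, x') (w, act g y) := samehyp_trans H_zy (nbr_stable zy zy_w).
have wp : adj w (act g y) := adj_act g zy.
have L_H : ~ samehyp L (x, x').
  by move=> L_H; apply: L_not_z; exists y => //; apply: samehyp_trans L_H H_zy.
apply: (push_edge (p := act g y) eL xx' x't L_x't L_H).
  by rewrite (hsep_trans _ _ w) H_xw H_wp hsep_edge.
rewrite (hsep_trans _ _ w) L_xw; apply/negP => /(samehyp_of_hsep eL wp) L_wp.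
by apply: L_H; apply: samehyp_trans L_wp (samehyp_sym H_wp).
Qed.

(* If the j-th hyperplane L of the geodesic were not adjacent to z, its dual
   edge at geo j could be pushed back along the geodesic down to z, making L
   adjacent to z after all. *)
Lemma geo_edge_at_z j : j < n -> hyp_at_z (geo_edge z w j).
Proof.
elim/ltn_ind: j => j IH j_n; apply: NNPP => L_not_z.
have push m : m <= j ->
    exists2 t, adj (geo z w (j - m)) t & samehyp (geo_edge z w j) (geo z w (j - m), t).
  elim: m => [_|m IHm m_j].
    by rewrite subn0; exists (geo z w j.+1); [exact: geo_adj | exact: samehyp_refl].
  have [t] := IHm (ltnW m_j); have -> : j - m = (j - m.+1).+1 by lia.
  move=> x't L_x't; apply: (push_toward_z _ _ _ _ _ _ _ x't L_x't).
  - exact: geo_adj.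
  - exact: L_not_z.
  - by apply: IH; lia.
  - by apply: geo_adj; lia.
  - by apply: hsep_geo_zw; lia.
  - by apply: hsep_geo_w; lia.
  - by apply: hsep_geo_w; lia.
have [t zt L_zt] := push j (leqnn j); rewrite subnn in zt L_zt.
by apply: L_not_z; exists t.
Qed.

Lemma sep_zw_stable e : is_edge adj e -> hsep e z w -> samehyp (act_edge act g e) e.
Proof.
move=> ee e_zw; have [i i_n e_i] := sep_geo_edge ee e_zw.
have [y zy i_zy] := geo_edge_at_z i_n; have e_zy := samehyp_trans e_i i_zy.
have zy_w : dist y w < dist z w by rewrite -hsep_nbr // -e_zy.
apply: samehyp_trans (proj2 (samehyp_act g e (z, y)) e_zy) _.
exact: samehyp_trans (samehyp_sym (nbr_stable zy zy_w)) (samehyp_sym e_zy).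
Qed.

Lemma hsep_zw_act e : is_edge adj e -> hsep (act_edge act g e) z w = hsep e z w.
Proof.
move=> ee; case e_zw: (hsep e z w); first by rewrite (sep_zw_stable ee e_zw).
apply/negbTE/negP => ge_zw; have := sep_zw_stable (is_edge_act g ee) ge_zw.
by move/samehyp_act/(_ z w); rewrite e_zw ge_zw.
Qed.

Definition zw_cube v := forall e, is_edge adj e -> hsep e z v -> hsep e z w.

Lemma zw_cube_z : zw_cube z.
Proof. by move=> e _; rewrite hsep_xx. Qed.

Lemma zw_cube_hsep a b e : zw_cube a -> zw_cube b -> is_edge adj e -> hsep e a b ->
  hsep e z w.
Proof.
move=> ca cb ee; rewrite (hsep_trans _ _ z) (hsepC e a).
by case ea: (hsep e z a); [rewrite (ca e ee ea) | exact: cb].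
Qed.

Lemma zw_cube_eq a b : zw_cube a -> zw_cube b ->
  (forall i : 'I_n, hsep (geo_edge z w i) z a = hsep (geo_edge z w i) z b) -> a = b.
Proof.
move=> ca cb same; apply: eq_of_hsep => e ee; apply/negP => e_ab.
have [i i_n e_i] := sep_geo_edge ee (zw_cube_hsep ca cb ee e_ab).
by move: e_ab; rewrite e_i (hsep_trans _ _ z) (hsepC _ a) (same (Ordinal i_n)) addbb.
Qed.

Lemma ex_zw_cube_vertex (S : 'I_n -> bool) m : exists v, zw_cube v /\
  forall i : 'I_n, hsep (geo_edge z w i) z v = S i && (i < m).
Proof.
elim: m => [|m [v [cv v_S]]].
  by exists z; split=> [|i]; [exact: zw_cube_z | rewrite hsep_xx andbF].
have [m_n|n_m] := ltnP m n; last first.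
  by exists v; split=> // i; rewrite v_S !(leq_trans (ltn_ord i)) // ltnW.
have [Sm|not_Sm] := boolP (S (Ordinal m_n)); last first.
  exists v; split=> // i; rewrite v_S [i < m.+1]ltnS [i <= m]leq_eqVlt.
  have [->|] := eqVneq i (Ordinal m_n); first by rewrite /= ltnn eqxx (negbTE not_Sm).
  by rewrite -val_eqE /= => /negbTE ->.
have [y zy m_zy] := geo_edge_at_z m_n.
have zy_sep e : is_edge adj e -> hsep e z y -> samehyp e (geo_edge z w m).
  by move=> ee e_zy; apply: samehyp_trans (samehyp_of_hsep ee zy e_zy) (samehyp_sym m_zy).
have cy : zw_cube y by move=> e ee /(zy_sep e ee) ->; apply: hsep_geo_zw.
have geo_y (i : 'I_n) : hsep (geo_edge z w i) z y = (val i == m).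
  apply/idP/eqP => [/(zy_sep _ (is_edge_geo (ltn_ord i)))|->]; last by rewrite m_zy hsep_edge.
  exact: samehyp_geo_inj (ltn_ord i) m_n.
have [c [c_med _]] := ex_unique_median v y w.
exists c; split=> [e ee|i].
  rewrite (hsep_median z ee c_med) => /or3P[] /andP[ez _].
  - exact: cv.
  - exact: cy.
  - exact: cv.
rewrite (hsep_median z (is_edge_geo (ltn_ord i)) c_med) v_S geo_y hsep_geo_zw // !andbT.
have [->|] := eqVneq i (Ordinal m_n); first by rewrite /= ltnn eqxx Sm ltnSn andbF orbT.
by rewrite -val_eqE /= => /negbTE im; rewrite im [i < m.+1]ltnS [i <= m]leq_eqVlt im andbF.
Qed.

Definition cube_vertex (S : {ffun 'I_n -> bool}) : V := epsilon (inhabits z)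
  (fun v => zw_cube v /\ forall i : 'I_n, hsep (geo_edge z w i) z v = S i).

Lemma cube_vertexP S : zw_cube (cube_vertex S) /\
  forall i : 'I_n, hsep (geo_edge z w i) z (cube_vertex S) = S i.
Proof.
rewrite /cube_vertex; apply epsilon_spec.
have [v [cv v_S]] := ex_zw_cube_vertex S n.
by exists v; split=> // i; rewrite v_S ltn_ord andbT.
Qed.

Lemma zw_cube_adj a b : zw_cube a -> zw_cube b ->
  adj a b <-> #|[pred i : 'I_n | hsep (geo_edge z w i) a b]| = 1.
Proof.
move=> ca cb; split=> [ab|/eqP/card1P[i0 only_i0]].
  have ab_zw := zw_cube_hsep (e := (a, b)) ca cb ab (hsep_edge ab).
  have [i0 i0_n ab_i0] := sep_geo_edge (e := (a, b)) ab ab_zw.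
  apply: (eq_card1 (x := Ordinal i0_n)) => i; rewrite !inE.
  apply/idP/eqP => [|->]; last by rewrite -ab_i0 hsep_edge.
  move/(samehyp_of_hsep (is_edge_geo (ltn_ord i)) ab) => i_ab; apply: val_inj.
  exact: samehyp_geo_inj (ltn_ord i) i0_n (samehyp_trans i_ab ab_i0).
apply: (adj_of_samehyp (L := geo_edge z w i0)) => [a_b|e ee e_ab].
  by have := only_i0 i0; rewrite !inE eqxx a_b hsep_xx.
have [i i_n e_i] := sep_geo_edge ee (zw_cube_hsep ca cb ee e_ab).
have : Ordinal i_n \in [pred i : 'I_n | hsep (geo_edge z w i) a b] by rewrite inE -e_i.
by rewrite only_i0 inE => /eqP <-.
Qed.

Lemma is_cube_zw_cube : is_cube adj zw_cube.
Proof.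
exists n, cube_vertex; split; [|split].
- move=> S S' SS'; apply/ffunP => i.
  by rewrite -(cube_vertexP S).2 -(cube_vertexP S').2 SS'.
- move=> v; split=> [cv|[S <-]]; last exact: (cube_vertexP S).1.
  exists [ffun i : 'I_n => hsep (geo_edge z w i) z v].
  by apply: zw_cube_eq (cube_vertexP _).1 cv _ => i; rewrite (cube_vertexP _).2 ffunE.
- move=> S S'; have [cS S_i] := cube_vertexP S; have [cS' S'_i] := cube_vertexP S'.
  apply: iff_trans (zw_cube_adj cS cS') _.
  suff -> : #|[pred i : 'I_n | hsep (geo_edge z w i) (cube_vertex S) (cube_vertex S')]|
          = #|[pred i | S i != S' i]| by [].
  apply: eq_card => i; rewrite !inE (hsep_trans _ _ z) (hsepC _ (cube_vertex S)) S_i S'_i.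
  by case: (S i); case: (S' i).
Qed.

Lemma zw_cube_act v : zw_cube v <-> zw_cube (act g v).
Proof.
split=> cv e ee.
  rewrite -(act_edgeKV g e); set e' := act_edge act (inv g) e.
  have ee' : is_edge adj e' := is_edge_act (inv g) ee.
  rewrite (hsep_trans _ _ w) hsep_act hsep_zw_act //.
  by move: (cv e' ee'); case: (hsep e' z w); case: (hsep e' z v).
move: (cv _ (is_edge_act g ee)); rewrite -(hsep_act g e z v) -(hsep_zw_act ee).
rewrite (hsep_trans _ z w (act g v)).
by case: (hsep _ z w); case: (hsep _ w (act g v)).
Qed.

Lemma act_fixes_z : no_cube_inversions adj act -> act g z = z.
Proof. by move=> no_inv; apply: no_inv is_cube_zw_cube zw_cube_act z zw_cube_z. Qed.

End FixedPoint.
End Action.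
End MedianGraph.

Section Separation.
Variables (V : Type) (adj : V -> V -> Prop).

Lemma separates_points e a b : is_edge adj e -> ~ sameside adj e a b ->
  separates adj e (fun v => v = a) (fun v => v = b).
Proof.
move=> ee not_ab; split=> //; split; first by move=> ? ? -> ->; apply: rst_refl.
by split=> [? ? -> ->|? ? -> ->] //; apply: rst_refl.
Qed.

Lemma separates_sub e A B a b : separates adj e A B -> A a -> B b ->
  separates adj e (fun v => v = a) (fun v => v = b).
Proof. by case=> ee [_ [_ sep]] Aa Bb; apply: separates_points ee (sep a b Aa Bb). Qed.

Lemma carrier_fst e : is_edge adj e -> carrier adj e e.1.
Proof. by move=> ee; exists e; split=> //; split; [apply: rst_refl | left]. Qed.

End Separation.

Theorem lemma3p5 (V : Type) (adj : V -> V -> Prop)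
  (G : Type) (mul : G -> G -> G) (one : G) (inv : G -> G) (act : G -> V -> V)
  (F : V * V -> Prop) :
  median_graph adj ->
  is_group mul one inv ->
  isometric_action adj mul one act ->
  no_cube_inversions adj act ->
  hyp_family adj F ->
  G_invariant act F ->
  strongly_collapsible adj act F ->
  weakly_collapsible adj act F.
Proof.
move=> med grp iso no_inv _ _ strong z g gz_z sep_F.
apply/gz_z/(act_fixes_z med grp iso _ no_inv) => y zy y_w.
have zy_w : hsep adj (z, y) z (act g z) by rewrite hsep_nbr.
have H_F : F (z, y).
  by apply/sep_F/separates_points => // /(sameside_hsep med (e := (z, y)) zy); rewrite zy_w.
apply: (samehyp_equiv med); apply: NNPP => not_stab.
apply: (strong _ g H_F not_stab) => e sep_e; apply: sep_F.
have gzy : is_edge adj (act_edge act g (z, y)) := is_edge_act iso g (e := (z, y)) zy.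
exact: separates_sub sep_e (carrier_fst (e := (z, y)) zy) (carrier_fst gzy).
Qed.
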